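(* Let $n\ge1$ and consider the map $f:\mathbb{H}\to\mathbb{H}$, $f(t)=t^n$, viewed as a map $\mathbb{R}^4\to\mathbb{R}^4$: writing $(x+\mathbf{i}y+\mathbf{j}z+\mathbf{k}w)^n=f_1+\mathbf{i}f_2+\mathbf{j}f_3+\mathbf{k}f_4$ with $f_r\in\mathbb{R}[x,y,z,w]$, set $f=(f_1,f_2,f_3,f_4)$. Then $|J(f)|\ge 0$ at every point of $\mathbb{R}^4$.
   Context: $\mathbb{H}$ is the real quaternion algebra with basis $1,\mathbf{i},\mathbf{j},\mathbf{k}$ and the usual relations; it is identified with $\mathbb{R}^4$ via $x+\mathbf{i}y+\mathbf{j}z+\mathbf{k}w\mapsto(x,y,z,w)$. A map $f:\mathbb{H}\to\mathbb{H}$ with $f=f_1+\mathbf{i}f_2+\mathbf{j}f_3+\mathbf{k}f_4$ is regarded as $(f_1,f_2,f_3,f_4):\mathbb{R}^4\to\mathbb{R}^4$; $J(f)=[\partial f_i/\partial x_j]$ with $(x_1,x_2,x_3,x_4)=(x,y,z,w)$, and $|J(f)|$ is its determinant. *)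

From Stdlib Require Import Reals.
Open Scope R_scope.

Record quat := Quat { qx : R; qy : R; qz : R; qw : R }.

Definition qone : quat := Quat 1 0 0 0.

(* Hamilton product (i^2 = j^2 = k^2 = ijk = -1). *)
Definition qmul (a b : quat) : quat :=
  Quat (qx a * qx b - qy a * qy b - qz a * qz b - qw a * qw b)
       (qx a * qy b + qy a * qx b + qz a * qw b - qw a * qz b)
       (qx a * qz b - qy a * qw b + qz a * qx b + qw a * qy b)
       (qx a * qw b + qy a * qz b - qz a * qy b + qw a * qx b).

Fixpoint qpow (t : quat) (n : nat) : quat :=
  match n with
  | O => qone
  | S m => qmul (qpow t m) t
  end.

Definition quat_of (p : nat -> R) : quat := Quat (p 0%nat) (p 1%nat) (p 2%nat) (p 3%nat).

(* r-th real component (r = 0,1,2,3 for f_1..f_4). *)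
Definition qcomp (r : nat) (q : quat) : R :=
  match r with
  | 0%nat => qx q | 1%nat => qy q | 2%nat => qz q | _ => qw q
  end.

Definition fpow (n r : nat) (p : nat -> R) : R := qcomp r (qpow (quat_of p) n).

Definition upd (p : nat -> R) (j : nat) (s : R) : nat -> R :=
  fun k => if Nat.eqb k j then s else p k.

Definition det3 (M : nat -> nat -> R) (a b c : nat) (d e f : nat) : R :=
    M a d * (M b e * M c f - M b f * M c e)
  - M a e * (M b d * M c f - M b f * M c d)
  + M a f * (M b d * M c e - M b e * M c d).

Definition det4 (M : nat -> nat -> R) : R :=
    M 0%nat 0%nat * det3 M 1 2 3 1 2 3
  - M 0%nat 1%nat * det3 M 1 2 3 0 2 3
  + M 0%nat 2%nat * det3 M 1 2 3 0 1 3
  - M 0%nat 3%nat * det3 M 1 2 3 0 1 2.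

(* Writing t = x + v with v = iy + jz + kw, we have v^2 = -s for s = y^2 + z^2 + w^2,
   so t^n = P(x,s) + Q(x,s) v for real polynomials P, Q.  The commutativity of
   x and v makes (P, Q) satisfy the Cauchy-Riemann type relations
   dP/dx = Q + 2 s dQ/ds and 2 dP/ds = - dQ/dx, and with them the Jacobian
   determinant collapses to Q^2 ((dP/dx)^2 + s (dQ/dx)^2), which is visibly nonnegative. *)
From Stdlib Require Import Reals Lia Psatz.
Open Scope R_scope.

(* [pow_re n a s] and [pow_im n a s] are P and Q with (a + v)^n = P + Q v whenever v^2 = -s. *)
Fixpoint pow_re (n : nat) (a s : R) : R :=
  match n with O => 1 | S m => a * pow_re m a s - s * pow_im m a s end
with pow_im (n : nat) (a s : R) : R :=
  match n with O => 0 | S m => pow_re m a s + a * pow_im m a s end.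

(* Partial derivatives of [pow_re] and [pow_im] in [a] and in [s], got by differentiating the recursion. *)
Fixpoint pow_re_da (n : nat) (a s : R) : R :=
  match n with O => 0 | S m => pow_re m a s + a * pow_re_da m a s - s * pow_im_da m a s end
with pow_im_da (n : nat) (a s : R) : R :=
  match n with O => 0 | S m => pow_re_da m a s + pow_im m a s + a * pow_im_da m a s end.

Fixpoint pow_re_ds (n : nat) (a s : R) : R :=
  match n with O => 0 | S m => a * pow_re_ds m a s - pow_im m a s - s * pow_im_ds m a s end
with pow_im_ds (n : nat) (a s : R) : R :=
  match n with O => 0 | S m => pow_re_ds m a s + a * pow_im_ds m a s end.

Lemma pow_re_im_cauchy_riemann n a s :
  pow_re_da n a s = pow_im n a s + 2 * s * pow_im_ds n a s /\
  pow_im_da n a s = - 2 * pow_re_ds n a s.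
Proof.
  induction n as [|n [Hre Him]]; simpl; [split; ring|].
  rewrite Hre, Him; split; ring.
Qed.

Lemma qpow_Quat n x y z w :
  let s := y * y + z * z + w * w in
  qpow (Quat x y z w) n =
  Quat (pow_re n x s) (pow_im n x s * y) (pow_im n x s * z) (pow_im n x s * w).
Proof.
  intro s; induction n as [|n IH]; simpl.
  - unfold qone; f_equal; ring.
  - rewrite IH; unfold qmul, s; simpl; f_equal; ring.
Qed.

Lemma derivable_pt_lim_mult_eq f g x lf lg l :
  derivable_pt_lim f x lf -> derivable_pt_lim g x lg ->
  l = lf * g x + f x * lg -> derivable_pt_lim (fun u => f u * g u) x l.
Proof. intros Hf Hg ->; exact (derivable_pt_lim_mult f g x lf lg Hf Hg). Qed.

Lemma derivable_pt_lim_plus_eq f g x lf lg l :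
  derivable_pt_lim f x lf -> derivable_pt_lim g x lg ->
  l = lf + lg -> derivable_pt_lim (fun u => f u + g u) x l.
Proof. intros Hf Hg ->; exact (derivable_pt_lim_plus f g x lf lg Hf Hg). Qed.

Lemma derivable_pt_lim_minus_eq f g x lf lg l :
  derivable_pt_lim f x lf -> derivable_pt_lim g x lg ->
  l = lf - lg -> derivable_pt_lim (fun u => f u - g u) x l.
Proof. intros Hf Hg ->; exact (derivable_pt_lim_minus f g x lf lg Hf Hg). Qed.

Lemma derivable_pt_lim_pow_re_im n (A S : R -> R) t dA dS :
  derivable_pt_lim A t dA -> derivable_pt_lim S t dS ->
  derivable_pt_lim (fun u => pow_re n (A u) (S u)) t
    (pow_re_da n (A t) (S t) * dA + pow_re_ds n (A t) (S t) * dS) /\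
  derivable_pt_lim (fun u => pow_im n (A u) (S u)) t
    (pow_im_da n (A t) (S t) * dA + pow_im_ds n (A t) (S t) * dS).
Proof.
  intros HA HS; induction n as [|n [Hre Him]]; simpl.
  - replace (0 * dA + 0 * dS) with 0 by ring.
    split; apply derivable_pt_lim_const.
  - split.
    + eapply derivable_pt_lim_minus_eq;
        [eapply derivable_pt_lim_mult_eq; [exact HA | exact Hre | reflexivity]
        |eapply derivable_pt_lim_mult_eq; [exact HS | exact Him | reflexivity]
        |ring].
    + eapply derivable_pt_lim_plus_eq;
        [exact Hre
        |eapply derivable_pt_lim_mult_eq; [exact HA | exact Him | reflexivity]
        |ring].
Qed.

Definition kronecker (k c : nat) : R := if Nat.eqb k c then 1 else 0.

Lemma upd_id p c : forall k, upd p c (p c) k = p k.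
Proof. intro k; unfold upd; destruct (Nat.eqb_spec k c); subst; reflexivity. Qed.

Lemma derivable_pt_lim_upd p c k :
  derivable_pt_lim (fun u => upd p c u k) (p c) (kronecker k c).
Proof.
  unfold upd, kronecker; destruct (Nat.eqb k c).
  - apply derivable_pt_lim_id.
  - apply derivable_pt_lim_const.
Qed.

Definition sq_norm_im (p : nat -> R) : R := p 1%nat * p 1%nat + p 2%nat * p 2%nat + p 3%nat * p 3%nat.

Lemma derivable_pt_lim_sq_norm_im p c :
  derivable_pt_lim (fun u => sq_norm_im (upd p c u)) (p c)
    (2 * (p 1%nat * kronecker 1 c + p 2%nat * kronecker 2 c + p 3%nat * kronecker 3 c)).
Proof.
  unfold sq_norm_im.
  eapply derivable_pt_lim_plus_eq; [eapply derivable_pt_lim_plus_eq | |].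
  all: try (eapply derivable_pt_lim_mult_eq;
              [apply derivable_pt_lim_upd | apply derivable_pt_lim_upd | reflexivity]).
  all: rewrite ?upd_id; try reflexivity; ring.
Qed.

Definition qpow_jacobian (n : nat) (p : nat -> R) (r c : nat) : R :=
  let x := p 0%nat in let s := sq_norm_im p in
  let ds := 2 * (p 1%nat * kronecker 1 c + p 2%nat * kronecker 2 c + p 3%nat * kronecker 3 c) in
  match r with
  | O => pow_re_da n x s * kronecker 0 c + pow_re_ds n x s * ds
  | _ => (pow_im_da n x s * kronecker 0 c + pow_im_ds n x s * ds) * p r
         + pow_im n x s * kronecker r c
  end.

Lemma fpow_eq n r q :
  fpow n r q =
  match r with
  | O => pow_re n (q 0%nat) (sq_norm_im q)
  | 1%nat | 2%nat | 3%nat => pow_im n (q 0%nat) (sq_norm_im q) * q r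
  | _ => pow_im n (q 0%nat) (sq_norm_im q) * q 3%nat
  end.
Proof. unfold fpow, quat_of; rewrite qpow_Quat; destruct r as [|[|[|[|r]]]]; reflexivity. Qed.

Lemma derivable_pt_lim_fpow n p r c : (r < 4)%nat ->
  derivable_pt_lim (fun u => fpow n r (upd p c u)) (p c) (qpow_jacobian n p r c).
Proof.
  intros Hr.
  destruct (derivable_pt_lim_pow_re_im n _ _ _ _ _
              (derivable_pt_lim_upd p c 0) (derivable_pt_lim_sq_norm_im p c)) as [Hre Him].
  assert (Hs : sq_norm_im (upd p c (p c)) = sq_norm_im p)
    by (unfold sq_norm_im; rewrite !upd_id; reflexivity).
  rewrite Hs, upd_id in Hre, Him.
  eapply derivable_pt_lim_ext; [intro u; symmetry; apply fpow_eq |].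
  unfold qpow_jacobian.
  destruct r as [|[|[|[|r]]]]; try lia; [exact Hre | ..].
  all: eapply derivable_pt_lim_mult_eq; [exact Him | apply derivable_pt_lim_upd |].
  all: rewrite Hs, !upd_id; reflexivity.
Qed.

Lemma det4_qpow_jacobian n p :
  let s := sq_norm_im p in
  let Q := pow_im n (p 0%nat) s in
  det4 (qpow_jacobian n p) =
  Q * Q * (pow_re_da n (p 0%nat) s * pow_re_da n (p 0%nat) s
           + s * (pow_im_da n (p 0%nat) s * pow_im_da n (p 0%nat) s)).
Proof.
  intros s Q.
  destruct (pow_re_im_cauchy_riemann n (p 0%nat) s) as [Hre Him].
  unfold det4, det3, qpow_jacobian, kronecker; simpl; fold s; fold Q.
  rewrite Hre, Him; subst Q s; unfold sq_norm_im; ring.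
Qed.

Lemma det4_ext (M N : nat -> nat -> R) :
  (forall r c, (r < 4)%nat -> (c < 4)%nat -> M r c = N r c) -> det4 M = det4 N.
Proof. intros H; unfold det4, det3; rewrite !H by lia; reflexivity. Qed.

Theorem corollary3p2 (n : nat) (hn : (1 <= n)%nat) (p : nat -> R)
  (J : nat -> nat -> R) :
  (forall r c : nat, (r < 4)%nat -> (c < 4)%nat ->
     derivable_pt_lim (fun s => fpow n r (upd p c s)) (p c) (J r c)) ->
  0 <= det4 J.
Proof.
  intros HJ.
  rewrite (det4_ext J (qpow_jacobian n p)), det4_qpow_jacobian.
  2: { intros r c Hr Hc.
       exact (uniqueness_limite _ _ _ _ (HJ r c Hr Hc) (derivable_pt_lim_fpow n p r c Hr)). }
  assert (0 <= sq_norm_im p) by (unfold sq_norm_im; nra).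
  apply Rmult_le_pos; [apply Rle_0_sqr |].
  apply Rplus_le_le_0_compat; [apply Rle_0_sqr |].
  apply Rmult_le_pos; [assumption | apply Rle_0_sqr].
Qed.
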